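(* Suppose $G(z)=\sum_{n\ge0}a_n^2z^n$ is type II admissible. Then there exist $\varepsilon\in(0,1)$, $C>0$ and $t_0$ such that for all $t\ge t_0$ and all integers $n\ge0$, \[ \left|a_n^2e^{nt}\frac{\sqrt{2\pi B(t)}}{H(t)}-\exp\left(-\frac{(n-A(t))^2}{2B(t)}\right)\right|\le\frac{C}{B^{\varepsilon}(t)}. \]
   Context: $G$ is entire with $a_n\ge0$, infinitely many non-zero; $H(t)=G(e^t)$, $A=H'/H$, $B=A'$. $G$ is type II admissible if: (1) $B$ is non-decreasing and unbounded; (2) $A(t)=O(B^2(t))$ as $t\to\infty$; (3) there exist constants $C_G>2$ and $\varepsilon>0$ such that, with $\delta(t)=\sqrt{C_G\log B(t)/B(t)}$, for all sufficiently large $t$ and all $|\theta|\le\delta(t)$, $\log\frac{H(t+i\theta)}{H(t)}=i\theta A(t)-\frac12\theta^2B(t)+\Delta(t,\theta)$ with $|\Delta(t,\theta)|\le B^{3/2-\varepsilon}(t)|\theta|^3$; (4) $|H(t+i\theta)|=O(H(t)/B(t))$ as $t\to\infty$, uniformly in $\delta(t)\le|\theta|\le\pi$. *)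

From Stdlib Require Import Reals.
From Coquelicot Require Import Coquelicot.
Open Scope R_scope.

Definition cexp (z : C) : C :=
  (exp (Re z) * cos (Im z), exp (Re z) * sin (Im z)).

Definition Hr (c : nat -> R) (t : R) : R := PSeries c (exp t).

(* H(t + i theta) = G(e^{t+i theta}) = sum_n c n e^{n t} e^{i n theta},
   given by its real and imaginary parts. *)
Definition Hc (c : nat -> R) (t theta : R) : C :=
  (Series (fun n => c n * exp (INR n * t) * cos (INR n * theta)),
   Series (fun n => c n * exp (INR n * t) * sin (INR n * theta))).

Definition Af (c : nat -> R) (t : R) : R := Derive (Hr c) t / Hr c t.
Definition Bf (c : nat -> R) (t : R) : R := Derive (Af c) t.

Definition deltaf (c : nat -> R) (CG t : R) : R :=
  sqrt (CG * ln (Bf c t) / Bf c t).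

Definition type_II_admissible (c : nat -> R) : Prop :=
  CV_radius c = p_infty /\
  (forall n, 0 <= c n) /\
  (forall N, exists n, (N <= n)%nat /\ c n <> 0) /\
  (forall t1 t2, t1 <= t2 -> Bf c t1 <= Bf c t2) /\
  (forall M, exists t, M < Bf c t) /\
  (exists K T, forall t, T <= t -> Rabs (Af c t) <= K * (Bf c t) ^ 2) /\
  (* (3) and (4), with the same constant C_G (hence the same delta) *)
  (exists CG eps, 2 < CG /\ 0 < eps /\
     (* (3) local expansion of log(H(t+i theta)/H(t)) *)
     (exists T, forall t theta, T <= t -> Rabs theta <= deltaf c CG t ->
       exists Delta : C,
         Cdiv (Hc c t theta) (RtoC (Hr c t)) =
           cexp (Cplus (- theta ^ 2 * Bf c t / 2, theta * Af c t) Delta) /\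
         Cmod Delta <= Rpower (Bf c t) (3 / 2 - eps) * Rabs theta ^ 3) /\
     (exists K T, forall t theta, T <= t ->
        deltaf c CG t <= Rabs theta -> Rabs theta <= PI ->
        Cmod (Hc c t theta) <= K * (Hr c t / Bf c t))).

From Stdlib Require Import Reals Lra Psatz.
From Coquelicot Require Import Coquelicot.
Open Scope R_scope.

(* Put w_k = a_k^2 e^{kt}, so that H(t + i th) = sum_k w_k e^{ik th} and, by orthogonality,
   pi w_n = int_0^pi Re (H(t + i th) e^{-in th}) dth.  For th <= delta condition (3) writes
   H(t + i th) / H(t) as exp (-B th^2/2 + i A th) times a factor e^Delta, and since
   |H(t + i th)| <= H(t) the integrand is H(t) e^{-B th^2/2} cos ((A - n) th) up to
   O(H B^{3/2-eps} delta^3); for delta <= th <= pi condition (4) bounds it by O(H/B).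
   The truncated Gaussian cosine integral int_0^delta e^{-B th^2/2} cos ((A - n) th) dth is
   e^{-(n-A)^2/(2B)} sqrt (pi/(2B)) up to O(e^{-B delta^2/2}/sqrt B) = O(B^{-C_G/2 - 1/2}),
   by Feynman's trick for the Gaussian integral and a first-order ODE in the frequency.
   After multiplying by sqrt (2 pi B) / (pi H) every error is O(B^{-eps'}), where halving eps
   absorbs the factor (log B)^2 coming from delta^4. *)

(* Goals produced by Coquelicot often live in a structure carrier that is only
   convertible to [R]; [ring] and [field] need them restated at type [R]. *)
Ltac R_eq := match goal with |- @eq _ ?a ?b => change (@eq R a b) end.

(* [auto_derive] produces [exp] arguments that are equal to the expected ones only up to [field]. *)
Ltac unify_exp_args :=
  match goal with |- context [exp ?a] => match goal with |- context [exp ?b] =>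
    assert_fails (constr_eq a b);
    replace (exp a) with (exp b) by (f_equal; field; repeat split; lra) end end.

Lemma exp_le_exp_of_le x y : x <= y -> exp x <= exp y.
Proof.
  intros [Hlt | ->]; [apply Rlt_le, exp_increasing, Hlt | apply Rle_refl].
Qed.

Lemma continuous_of_ex_derive (f : R -> R) x : ex_derive f x -> continuous f x.
Proof. apply (@ex_derive_continuous R_AbsRing R_NormedModule). Qed.

Lemma ex_RInt_of_ex_derive (f : R -> R) a b :
  (forall z, Rmin a b <= z <= Rmax a b -> ex_derive f z) -> ex_RInt f a b.
Proof.
  intros Hf. apply (@ex_RInt_continuous R_CompleteNormedModule).
  intros z Hz. apply continuous_of_ex_derive, Hf, Hz.
Qed.

Lemma ex_RInt_abs_of_ex_derive (f : R -> R) a b :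
  (forall z, Rmin a b <= z <= Rmax a b -> ex_derive f z) -> ex_RInt (fun x => Rabs (f x)) a b.
Proof.
  intros Hf. apply (@ex_RInt_continuous R_CompleteNormedModule).
  intros z Hz. apply continuous_Rabs_comp, continuous_of_ex_derive, Hf, Hz.
Qed.

Lemma RInt_correct_R (f : R -> R) a b : ex_RInt f a b -> is_RInt f a b (RInt f a b).
Proof. apply (@RInt_correct R_CompleteNormedModule). Qed.

Lemma is_RInt_unique_R (f : R -> R) a b l : is_RInt f a b l -> RInt f a b = l.
Proof. apply (@is_RInt_unique R_CompleteNormedModule). Qed.

Lemma RInt_derive_R (F f : R -> R) a b :
  (forall x, Rmin a b <= x <= Rmax a b -> is_derive F x (f x)) ->
  (forall x, Rmin a b <= x <= Rmax a b -> ex_derive f x) ->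
  RInt f a b = F b - F a.
Proof.
  intros HF Hf. apply is_RInt_unique_R.
  apply (@is_RInt_derive R_CompleteNormedModule F f); [exact HF |].
  intros x Hx. apply continuous_of_ex_derive, Hf, Hx.
Qed.

Lemma RInt_const_R a b (c : R) : RInt (fun _ => c) a b = (b - a) * c.
Proof. rewrite RInt_const. reflexivity. Qed.

Lemma is_derive_0_const (F : R -> R) x : (forall y, is_derive F y 0) -> F x = F 0.
Proof.
  intros HF.
  assert (E : RInt (fun _ => 0) 0 x = F x - F 0).
  { apply RInt_derive_R; [intros; apply HF | intros; auto_derive; auto]. }
  rewrite RInt_const_R in E. lra.
Qed.

(** * Truncated Gaussian integrals *)

Definition gauss_int (b x : R) : R := RInt (fun t => exp (-(b*t^2)/2)) 0 x.

(* Feynman's trick: [gauss_int b x ^ 2 + 2/b * gauss_aux b x] does not depend on [x]. *)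
Definition gauss_aux (b x : R) : R := RInt (fun s => exp (-(b*x^2*(1+s^2))/2) / (1+s^2)) 0 1.

Lemma ex_RInt_gauss b u v : ex_RInt (fun t => exp (-(b*t^2)/2)) u v.
Proof. apply ex_RInt_of_ex_derive; intros; auto_derive; auto. Qed.

Lemma ex_RInt_gauss_aux b x : ex_RInt (fun s => exp (-(b*x^2*(1+s^2))/2) / (1+s^2)) 0 1.
Proof. apply ex_RInt_of_ex_derive; intros; auto_derive; nra. Qed.

Lemma is_derive_gauss_int b x : is_derive (gauss_int b) x (exp (-(b*x^2)/2)).
Proof.
  apply (is_derive_RInt (fun t => exp (-(b*t^2)/2)) (gauss_int b) 0 x).
  - apply filter_forall; intros y. apply RInt_correct_R, ex_RInt_gauss.
  - apply continuous_of_ex_derive; auto_derive; auto.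
Qed.

Lemma is_derive_gauss_aux b x :
  is_derive (gauss_aux b) x (RInt (fun s => -(b*x) * exp (-(b*x^2*(1+s^2))/2)) 0 1).
Proof.
  set (f := fun y s => exp (-(b*y^2*(1+s^2))/2) / (1+s^2)).
  assert (Hf' : forall u v, Derive (fun z => f z v) u = -(b*u) * exp (-(b*u^2*(1+v^2))/2)).
  { intros u v. apply is_derive_unique. unfold f. auto_derive; [nra |].
    repeat unify_exp_args. field. nra. }
  rewrite <- (RInt_ext (fun s => Derive (fun u => f u s) x)) by (intros; apply Hf').
  apply (is_derive_RInt_param f 0 1 x).
  - apply filter_forall; intros y s _. unfold f. auto_derive. nra.
  - intros s _. eapply continuity_2d_pt_ext; [intros u v; symmetry; apply Hf' |].
    apply continuity_2d_pt_mult.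
    + apply continuity_2d_pt_opp, continuity_2d_pt_mult;
        [apply continuity_2d_pt_const | apply continuity_2d_pt_id1].
    + apply continuity_1d_2d_pt_comp with (f := exp);
        [apply derivable_continuous_pt, derivable_pt_exp |].
      repeat first [ apply continuity_2d_pt_mult | apply continuity_2d_pt_opp
                   | apply continuity_2d_pt_plus | apply continuity_2d_pt_id1
                   | apply continuity_2d_pt_id2 | apply continuity_2d_pt_const ].
  - apply filter_forall; intros y. apply ex_RInt_gauss_aux.
Qed.

Lemma gauss_int_rescale b x : gauss_int b x = x * RInt (fun s => exp (-(b*(x*s)^2)/2)) 0 1.
Proof.
  unfold gauss_int.
  pose proof (RInt_comp_lin (V := R_CompleteNormedModule) (fun t => exp (-(b*t^2)/2)) x 0 0 1) as E.
  replace (x*0+0) with 0 in E by ring. replace (x*1+0) with x in E by ring.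
  rewrite <- E by apply ex_RInt_gauss.
  rewrite <- (RInt_scal (V := R_CompleteNormedModule))
    by (apply ex_RInt_of_ex_derive; intros; auto_derive; auto).
  apply RInt_ext. intros y _. change (scal ?u ?v) with (u * v). do 3 f_equal. ring.
Qed.

Lemma is_derive_gauss_int_sq_add_aux b x : 0 < b ->
  is_derive (fun x => gauss_int b x ^ 2 + 2/b * gauss_aux b x) x 0.
Proof.
  intros Hb.
  assert (H : is_derive (fun x => gauss_int b x ^ 2 + 2/b * gauss_aux b x) x
     (2 * exp (-(b*x^2)/2) * gauss_int b x
      + 2/b * RInt (fun s => -(b*x) * exp (-(b*x^2*(1+s^2))/2)) 0 1)).
  { apply (is_derive_plus (K := R_AbsRing) (V := R_NormedModule)).
    - replace (2 * exp (-(b*x^2)/2) * gauss_int b x)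
        with (INR 2 * exp (-(b*x^2)/2) * gauss_int b x ^ Nat.pred 2) by (simpl; ring).
      apply (is_derive_pow (gauss_int b) 2 x), is_derive_gauss_int.
    - apply (is_derive_scal (gauss_aux b) x (2/b)), is_derive_gauss_aux. }
  replace 0 with (2 * exp (-(b*x^2)/2) * gauss_int b x
                  + 2/b * RInt (fun s => -(b*x) * exp (-(b*x^2*(1+s^2))/2)) 0 1); [exact H |].
  rewrite (RInt_ext _ (fun s => scal (-(b*x) * exp (-(b*x^2)/2)) (exp (-(b*(x*s)^2)/2)))).
  2:{ intros s _. change (scal ?u ?v) with (u * v).
      rewrite (Rmult_assoc (- (b*x))), <- exp_plus. repeat unify_exp_args. reflexivity. }
  rewrite (RInt_scal (V := R_CompleteNormedModule))
    by (apply ex_RInt_of_ex_derive; intros; auto_derive; auto).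
  change (scal ?u ?v) with (u * v). rewrite gauss_int_rescale. field. lra.
Qed.

Lemma gauss_aux_0 b : gauss_aux b 0 = PI / 4.
Proof.
  unfold gauss_aux. rewrite (RInt_ext _ (fun s => / (1 + s^2))).
  2:{ intros s _. replace (-(b*0^2*(1+s^2))/2) with 0 by field. rewrite exp_0. R_eq. field. nra. }
  rewrite (RInt_derive_R atan), atan_1, atan_0; [lra | |].
  - intros x _. replace (x^2) with (Rsqr x) by (unfold Rsqr; ring). apply is_derive_atan.
  - intros x _. auto_derive. nra.
Qed.

Lemma gauss_int_sq_add_aux b x : 0 < b -> gauss_int b x ^ 2 + 2/b * gauss_aux b x = PI / (2*b).
Proof.
  intros Hb.
  rewrite (is_derive_0_const (fun x => gauss_int b x ^ 2 + 2/b * gauss_aux b x) x)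
    by (intros; apply is_derive_gauss_int_sq_add_aux, Hb).
  unfold gauss_int at 1. rewrite RInt_point, gauss_aux_0. unfold zero; simpl. field. lra.
Qed.

Lemma gauss_aux_bounds b x : 0 < b -> 0 <= gauss_aux b x <= exp (-(b*x^2)/2).
Proof.
  intros Hb. unfold gauss_aux. split.
  - apply RInt_ge_0; [lra | apply ex_RInt_gauss_aux |].
    intros s _. apply Rle_mult_inv_pos; [apply Rlt_le, exp_pos | nra].
  - replace (exp (-(b*x^2)/2)) with (RInt (fun _ => exp (-(b*x^2)/2)) 0 1)
      by (rewrite RInt_const_R; R_eq; ring).
    apply RInt_le; [lra | apply ex_RInt_gauss_aux
                   | apply ex_RInt_of_ex_derive; intros; auto_derive; auto |].
    intros s _. apply Rle_trans with (exp (-(b*x^2*(1+s^2))/2)).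
    + unfold Rdiv. rewrite <- (Rmult_1_r (exp _)) at 2.
      apply Rmult_le_compat_l; [apply Rlt_le, exp_pos |].
      rewrite <- Rinv_1. apply Rinv_le_contravar; nra.
    + apply exp_le_exp_of_le. assert (0 <= b*x^2*s^2) by (apply Rmult_le_pos; nra). nra.
Qed.

Lemma gauss_int_ge0 b x : 0 <= x -> 0 <= gauss_int b x.
Proof.
  intros Hx. apply RInt_ge_0; [exact Hx | apply ex_RInt_gauss |].
  intros; apply Rlt_le, exp_pos.
Qed.

(* From [g^2 - s^2 = -(2/b) K] with [s^2 = PI/(2b)]: [|g - s| = (2/b) K / (g + s) <= (2/b) K / s]. *)
Lemma gauss_int_approx b x : 0 < b -> 0 <= x ->
  Rabs (gauss_int b x - sqrt (PI/(2*b))) <= (2/b) * exp (-(b*x^2)/2) / sqrt (PI/(2*b)).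
Proof.
  intros Hb Hx.
  pose proof (gauss_int_sq_add_aux b x Hb) as HF.
  pose proof (gauss_aux_bounds b x Hb) as HK.
  pose proof (gauss_int_ge0 b x Hx) as Hg.
  assert (Hp : 0 < PI/(2*b)) by (apply Rdiv_lt_0_compat; [apply PI_RGT_0 | lra]).
  set (s := sqrt (PI/(2*b))) in *.
  assert (Hs : 0 < s) by (apply sqrt_lt_R0; auto).
  assert (Hs2 : s * s = PI/(2*b)) by (apply sqrt_sqrt; lra).
  set (g := gauss_int b x) in *. set (K := gauss_aux b x) in *.
  assert (Hgs : g - s = - (2/b) * K / (g + s)).
  { apply (Rmult_eq_reg_r (g + s)); [| lra].
    replace ((g - s) * (g + s)) with (g^2 - s*s) by ring.
    rewrite Hs2, <- HF. field. lra. }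
  assert (H2K : 0 <= 2/b * K) by (apply Rmult_le_pos; [apply Rlt_le, Rdiv_lt_0_compat |]; lra).
  rewrite Hgs, Rabs_div by lra. rewrite (Rabs_right (g + s)) by lra.
  rewrite Rabs_left1 by lra.
  replace (- (- (2/b) * K)) with (2/b * K) by ring.
  unfold Rdiv. apply Rmult_le_compat; [lra | apply Rlt_le, Rinv_0_lt_compat; lra | |].
  - apply Rmult_le_compat_l; [apply Rlt_le, Rdiv_lt_0_compat |]; lra.
  - apply Rinv_le_contravar; lra.
Qed.

Definition gauss_cos (b d y : R) : R := RInt (fun th => exp (-(b*th^2)/2) * cos (th*y)) 0 d.

Lemma ex_RInt_gauss_cos b y u v : ex_RInt (fun th => exp (-(b*th^2)/2) * cos (th*y)) u v.
Proof. apply ex_RInt_of_ex_derive; intros; auto_derive; auto. Qed.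

Lemma gauss_cos_0 b d : gauss_cos b d 0 = gauss_int b d.
Proof. apply RInt_ext. intros x _. rewrite Rmult_0_r, cos_0. R_eq. ring. Qed.

Lemma gauss_cos_opp b d y : gauss_cos b d (- y) = gauss_cos b d y.
Proof. apply RInt_ext. intros x _. rewrite <- cos_neg. do 2 f_equal. ring. Qed.

Lemma is_derive_gauss_cos b d y :
  is_derive (gauss_cos b d) y (RInt (fun th => exp (-(b*th^2)/2) * (-(th * sin (th*y)))) 0 d).
Proof.
  set (f := fun y th => exp (-(b*th^2)/2) * cos (th*y)).
  assert (Hf' : forall u v, Derive (fun z => f z v) u = exp (-(b*v^2)/2) * (-(v * sin (v*u)))).
  { intros u v. apply is_derive_unique. unfold f. auto_derive; auto.
    repeat unify_exp_args. R_eq. ring. }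
  rewrite <- (RInt_ext (fun th => Derive (fun u => f u th) y)) by (intros; apply Hf').
  apply (is_derive_RInt_param f 0 d y).
  - apply filter_forall; intros z th _. unfold f. auto_derive. auto.
  - intros th _. eapply continuity_2d_pt_ext; [intros u v; symmetry; apply Hf' |].
    apply continuity_2d_pt_mult.
    + apply continuity_1d_2d_pt_comp with (f := exp);
        [apply derivable_continuous_pt, derivable_pt_exp |].
      repeat first [ apply continuity_2d_pt_mult | apply continuity_2d_pt_opp
                   | apply continuity_2d_pt_id2 | apply continuity_2d_pt_const ].
    + apply continuity_2d_pt_opp, continuity_2d_pt_mult; [apply continuity_2d_pt_id2 |].
      apply continuity_1d_2d_pt_comp with (f := sin);
        [apply derivable_continuous_pt, derivable_pt_sin |].
      apply continuity_2d_pt_mult; [apply continuity_2d_pt_id2 | apply continuity_2d_pt_id1].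
  - apply filter_forall; intros z. apply ex_RInt_gauss_cos.
Qed.

(* Integration by parts, using [-b th exp (-(b th^2)/2)] as the derivative of the Gaussian. *)
Lemma gauss_cos_deriv_by_parts b d y : 0 < b ->
  RInt (fun th => exp (-(b*th^2)/2) * (-(th * sin (th*y)))) 0 d
  = (1/b) * (exp (-(b*d^2)/2) * sin (d*y) - y * gauss_cos b d y).
Proof.
  intros Hb.
  set (P := fun th => exp (-(b*th^2)/2) * sin (th*y)).
  set (dP := fun th => -(b*th) * exp (-(b*th^2)/2) * sin (th*y)
                       + y * (exp (-(b*th^2)/2) * cos (th*y))).
  assert (HP : RInt dP 0 d = P d - P 0).
  { apply RInt_derive_R.
    - intros x _. unfold P, dP. auto_derive; auto. repeat unify_exp_args. R_eq. field.
    - intros x _. unfold dP. auto_derive. auto. }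
  rewrite (RInt_ext _ (fun th => plus (scal (1/b) (dP th))
                                      (scal (-(y/b)) (exp (-(b*th^2)/2) * cos (th*y))))).
  2:{ intros x _. unfold dP. change (scal ?u ?v) with (u * v). unfold plus; simpl. field. lra. }
  rewrite (RInt_plus (V := R_CompleteNormedModule)), !(RInt_scal (V := R_CompleteNormedModule));
    try (apply ex_RInt_of_ex_derive; intros; unfold dP, scal; simpl; unfold mult; simpl;
         auto_derive; auto).
  rewrite HP. fold (gauss_cos b d y). unfold P, plus; simpl. change (scal ?u ?v) with (u * v).
  replace (0 * y) with 0 by ring. rewrite sin_0. R_eq. field. lra.
Qed.

Lemma gauss_cos_variation b d y : 0 < b ->
  gauss_cos b d y * exp (y^2/(2*b)) - gauss_int b d =
  RInt (fun s => (1/b) * exp (-(b*d^2)/2) * sin (d*s) * exp (s^2/(2*b))) 0 y.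
Proof.
  intros Hb.
  rewrite (RInt_derive_R (fun y => gauss_cos b d y * exp (y^2/(2*b)))).
  - rewrite gauss_cos_0. replace (0^2/(2*b)) with 0 by (field; lra). rewrite exp_0. ring.
  - intros x _.
    assert (He : is_derive (fun y => exp (y^2/(2*b))) x (exp (x^2/(2*b)) * (x/b)))
      by (auto_derive; [auto | repeat unify_exp_args; R_eq; field; lra]).
    pose proof (is_derive_mult (K := R_AbsRing) (gauss_cos b d) _ x _ _
                  (is_derive_gauss_cos b d x) He (fun u v => Rmult_comm u v)) as Hm.
    rewrite gauss_cos_deriv_by_parts in Hm by exact Hb.
    unfold plus, mult in Hm; simpl in Hm.
    replace (1/b * exp (-(b*d^2)/2) * sin (d*x) * exp (x^2/(2*b)))
      with (1/b * (exp (-(b*d^2)/2) * sin (d*x) - x * gauss_cos b d x) * exp (x^2/(2*b))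
            + gauss_cos b d x * (exp (x^2/(2*b)) * (x/b))) by (R_eq; field; lra).
    exact Hm.
  - intros x _. auto_derive. auto.
Qed.

(* A Dawson-function bound: for [y <= sqrt (2b)] bound the integrand by 1, otherwise
   use [s^2 - y^2 <= y (s - y)] and integrate the exponential exactly. *)
Lemma RInt_exp_sq_sub_sq_le b y : 0 < b -> 0 <= y ->
  RInt (fun s => exp ((s^2 - y^2)/(2*b))) 0 y <= sqrt (2*b).
Proof.
  intros Hb Hy.
  assert (Hs : 0 < sqrt (2*b)) by (apply sqrt_lt_R0; lra).
  assert (Hs2 : sqrt (2*b) * sqrt (2*b) = 2*b) by (apply sqrt_sqrt; lra).
  assert (Hex : forall f : R -> R, (forall z, ex_derive f z) -> ex_RInt f 0 y)
    by (intros f Hf; apply ex_RInt_of_ex_derive; intros; apply Hf).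
  destruct (Rle_lt_dec y (sqrt (2*b))) as [Hle | Hlt].
  - apply Rle_trans with (RInt (fun _ => 1) 0 y); [| rewrite RInt_const_R; simpl; lra].
    apply RInt_le; [exact Hy | apply Hex; intros; auto_derive; auto | apply Hex; intros; auto_derive; auto |].
    intros s Hsy. rewrite <- exp_0. apply exp_le_exp_of_le.
    apply Rmult_le_0_r; [nra | apply Rlt_le, Rinv_0_lt_compat; lra].
  - assert (Hy0 : 0 < y) by lra.
    apply Rle_trans with (RInt (fun s => exp (y*(s-y)/(2*b))) 0 y).
    + apply RInt_le; [exact Hy | apply Hex; intros; auto_derive; auto | apply Hex; intros; auto_derive; auto |].
      intros s Hsy. apply exp_le_exp_of_le. unfold Rdiv.
      apply Rmult_le_compat_r; [apply Rlt_le, Rinv_0_lt_compat |]; nra.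
    + rewrite (RInt_derive_R (fun s => (2*b/y) * exp (y*(s-y)/(2*b)))).
      * replace (y*(y-y)/(2*b)) with 0 by (field; lra). rewrite exp_0.
        pose proof (exp_pos (y*(0-y)/(2*b))).
        assert (H2by : 2*b/y < sqrt (2*b)).
        { apply (Rmult_lt_reg_r y); [exact Hy0 |].
          unfold Rdiv. rewrite Rmult_assoc, Rinv_l by lra. nra. }
        assert (0 < 2*b/y) by (apply Rdiv_lt_0_compat; lra). nra.
      * intros x _. auto_derive; auto. repeat unify_exp_args. R_eq. field. lra.
      * intros x _. auto_derive. auto.
Qed.

Lemma gauss_cos_approx_gauss_int b d y : 0 < b -> 0 <= y ->
  Rabs (gauss_cos b d y - exp (-(y^2)/(2*b)) * gauss_int b d)
  <= exp (-(b*d^2)/2) / b * sqrt (2*b).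
Proof.
  intros Hb Hy.
  assert (Heq : gauss_cos b d y - exp (-(y^2)/(2*b)) * gauss_int b d
    = exp (-(y^2)/(2*b))
      * RInt (fun s => (1/b) * exp (-(b*d^2)/2) * sin (d*s) * exp (s^2/(2*b))) 0 y).
  { rewrite <- gauss_cos_variation by exact Hb.
    replace (gauss_cos b d y) with (gauss_cos b d y * exp (y^2/(2*b)) * exp (-(y^2)/(2*b))) at 1.
    - ring.
    - rewrite Rmult_assoc, <- exp_plus.
      replace (y^2/(2*b) + -(y^2)/(2*b)) with 0 by (field; lra). rewrite exp_0. ring. }
  rewrite Heq, Rabs_mult, Rabs_right by (apply Rle_ge, Rlt_le, exp_pos).
  set (E := exp (-(b*d^2)/2)).
  assert (HE : 0 < E) by apply exp_pos.
  apply Rle_trans with (exp (-(y^2)/(2*b)) * RInt (fun s => (E/b) * exp (s^2/(2*b))) 0 y).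
  - apply Rmult_le_compat_l; [apply Rlt_le, exp_pos |].
    eapply Rle_trans; [apply abs_RInt_le; [exact Hy |] |].
    { apply ex_RInt_of_ex_derive; intros; auto_derive; auto. }
    apply RInt_le; [exact Hy | apply ex_RInt_abs_of_ex_derive; intros; auto_derive; auto
                   | apply ex_RInt_of_ex_derive; intros; auto_derive; auto |].
    intros s _. rewrite !Rabs_mult, (Rabs_right (exp _)), (Rabs_right E),
      (Rabs_right (1/b)) by (apply Rle_ge; try apply Rlt_le, exp_pos;
                             try apply Rlt_le, Rdiv_lt_0_compat; lra).
    assert (Hsin : Rabs (sin (d*s)) <= 1) by (apply Rabs_le, SIN_bound).
    assert (0 <= 1/b * E) by (apply Rmult_le_pos; [apply Rlt_le, Rdiv_lt_0_compat |]; lra).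
    apply Rmult_le_compat_r; [apply Rlt_le, exp_pos |].
    replace (E / b) with (1/b * E * 1) by (field; lra).
    apply Rmult_le_compat_l; assumption.
  - rewrite <- (RInt_scal (V := R_CompleteNormedModule))
      by (apply ex_RInt_of_ex_derive; intros; auto_derive; auto).
    rewrite (RInt_ext _ (fun s => scal (E/b) (exp ((s^2 - y^2)/(2*b))))).
    2:{ intros s _. change (scal ?u ?v) with (u*v).
        rewrite <- Rmult_assoc, (Rmult_comm _ (E/b)), Rmult_assoc, <- exp_plus.
        repeat unify_exp_args. reflexivity. }
    rewrite (RInt_scal (V := R_CompleteNormedModule))
      by (apply ex_RInt_of_ex_derive; intros; auto_derive; auto).
    change (scal ?u ?v) with (u*v).
    apply Rmult_le_compat_l; [apply Rlt_le, Rdiv_lt_0_compat; lra |].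
    apply RInt_exp_sq_sub_sq_le; assumption.
Qed.

Lemma gauss_error_sum_le b E : 0 < b -> 0 <= E ->
  E / b * sqrt (2*b) + 2 / b * E / sqrt (PI/(2*b)) <= 4 * E / sqrt b.
Proof.
  intros Hb HE.
  set (r := sqrt b). set (p := sqrt (PI/2)).
  assert (Hr : 0 < r) by (apply sqrt_lt_R0, Hb).
  assert (Hrr : r * r = b) by (apply sqrt_sqrt; lra).
  assert (Hp : 1 <= p) by (rewrite <- sqrt_1; apply sqrt_le_1_alt; pose proof PI2_1; lra).
  assert (Hs : sqrt (PI/(2*b)) = p / r)
    by (unfold p, r; rewrite <- sqrt_div_alt by exact Hb; f_equal; field; lra).
  assert (Hsqrt2 : sqrt 2 <= 2)
    by (pose proof (sqrt_pos 2); pose proof (sqrt_sqrt 2 ltac:(lra)); nra).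
  assert (HEr : 0 <= E / r) by (apply Rmult_le_pos; [| apply Rlt_le, Rinv_0_lt_compat]; assumption).
  assert (B1 : E / b * sqrt (2*b) <= 2 * (E / r)).
  { rewrite sqrt_mult by lra. fold r.
    replace (E / b * (sqrt 2 * r)) with (sqrt 2 * (E / r)) by (rewrite <- Hrr; field; lra).
    apply Rmult_le_compat_r; assumption. }
  assert (B2 : 2 / b * E / sqrt (PI/(2*b)) <= 2 * (E / r)).
  { rewrite Hs. replace (2 / b * E / (p/r)) with (2 * (E / r) * / p) by (rewrite <- Hrr; field; lra).
    rewrite <- (Rmult_1_r (2 * (E / r))) at 2. apply Rmult_le_compat_l; [lra |].
    rewrite <- Rinv_1. apply Rinv_le_contravar; lra. }
  replace (4 * E / r) with (2 * (E / r) + 2 * (E / r)) by (field; lra). lra.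
Qed.

Lemma gauss_cos_approx b d y : 0 < b -> 0 <= d ->
  Rabs (gauss_cos b d y - exp (-(y^2)/(2*b)) * sqrt (PI/(2*b)))
  <= 4 * exp (-(b*d^2)/2) / sqrt b.
Proof.
  intros Hb Hd.
  assert (Hy : gauss_cos b d y = gauss_cos b d (Rabs y) /\ y^2 = Rabs y ^ 2).
  { unfold Rabs. destruct (Rcase_abs y); [rewrite gauss_cos_opp |]; split; reflexivity || ring. }
  destruct Hy as [-> ->].
  pose proof (gauss_cos_approx_gauss_int b d (Rabs y) Hb (Rabs_pos y)) as H1.
  pose proof (gauss_int_approx b d Hb Hd) as H2.
  set (E := exp (-(b*d^2)/2)) in *. set (G := exp (-(Rabs y^2)/(2*b))) in *.
  assert (HG : 0 < G <= 1).
  { split; [apply exp_pos | rewrite <- exp_0; apply exp_le_exp_of_le].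
    apply Rmult_le_0_r; [pose proof (pow2_ge_0 (Rabs y)); lra | apply Rlt_le, Rinv_0_lt_compat; lra]. }
  eapply Rle_trans; [| apply gauss_error_sum_le; [exact Hb | apply Rlt_le, exp_pos]].
  replace (gauss_cos b d (Rabs y) - G * sqrt (PI/(2*b)))
    with ((gauss_cos b d (Rabs y) - G * gauss_int b d) + G * (gauss_int b d - sqrt (PI/(2*b))))
    by ring.
  eapply Rle_trans; [apply Rabs_triang |].
  rewrite Rabs_mult, (Rabs_right G) by lra.
  apply Rplus_le_compat; [exact H1 |].
  rewrite <- (Rmult_1_l (2 / b * E / _)). apply Rmult_le_compat; [lra | apply Rabs_pos | lra | exact H2].
Qed.

(** * Fourier coefficients of nonnegative trigonometric series *)

Lemma Series_sub_sum_n_abs_le (w u : nat -> R) N :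
  ex_series w -> (forall k, Rabs (u k) <= w k) ->
  Rabs (Series u - sum_n u N) <= Series w - sum_n w N.
Proof.
  intros Hw Hu.
  assert (Hu' : ex_series u) by (apply (ex_series_le (V := R_CompleteNormedModule) u w); auto).
  assert (Hua : ex_series (fun k => Rabs (u k))).
  { apply (ex_series_le (V := R_CompleteNormedModule) _ w); auto.
    intros k. unfold norm; simpl. unfold abs; simpl. rewrite Rabs_Rabsolu. auto. }
  rewrite (Series_incr_n u (S N)), (Series_incr_n w (S N)) by (auto; lia).
  simpl Init.Nat.pred. rewrite <- !sum_n_Reals.
  replace (sum_n u N + Series (fun k => u (S N + k)%nat) - sum_n u N)
    with (Series (fun k => u (S N + k)%nat)) by ring.
  replace (sum_n w N + Series (fun k => w (S N + k)%nat) - sum_n w N)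
    with (Series (fun k => w (S N + k)%nat)) by ring.
  eapply Rle_trans; [apply Series_Rabs, (ex_series_incr_n (fun k => Rabs (u k)) (S N)), Hua |].
  apply Series_le; [intros k; split; [apply Rabs_pos | apply Hu] |].
  apply (ex_series_incr_n w (S N)), Hw.
Qed.

Lemma Series_sub_sum_n_ge0 (w : nat -> R) N :
  ex_series w -> (forall k, 0 <= w k) -> 0 <= Series w - sum_n w N.
Proof.
  intros Hw Hp. eapply Rle_trans; [apply Rabs_pos |].
  apply (Series_sub_sum_n_abs_le w w N Hw). intros k. rewrite Rabs_right; [lra | apply Rle_ge, Hp].
Qed.

Lemma Series_sub_sum_n_small (w : nat -> R) eta n : ex_series w -> 0 < eta ->
  exists N, (n <= N)%nat /\ Series w - sum_n w N < eta.
Proof.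
  intros Hw He.
  pose proof (Series_correct _ Hw) as H. apply is_series_Reals in H.
  destruct (H eta He) as [N0 HN0].
  exists (max n N0). split; [lia |].
  specialize (HN0 (max n N0) ltac:(lia)). unfold R_dist in HN0. rewrite <- sum_n_Reals in HN0.
  apply Rabs_lt_between in HN0. lra.
Qed.

Lemma Series_pos (w : nat -> R) k : ex_series w -> (forall j, 0 <= w j) -> 0 < w k -> 0 < Series w.
Proof.
  intros Hw Hp Hk.
  assert (Hsum : forall m, 0 <= sum_n w m).
  { induction m as [| m IH]; [rewrite sum_O; apply Hp |].
    rewrite sum_Sn. pose proof (Hp (S m)). change (plus ?a ?b) with (a + b). lra. }
  assert (Hk' : w k <= sum_n w k).
  { destruct k as [| k]; [rewrite sum_O; lra |].
    rewrite sum_Sn. pose proof (Hsum k). change (plus ?a ?b) with (a + b). lra. }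
  pose proof (Series_sub_sum_n_ge0 w k Hw Hp). lra.
Qed.

Lemma cos_lipschitz a b : Rabs (cos a - cos b) <= Rabs (a - b).
Proof.
  destruct (MVT_abs cos (fun x => - sin x) b a) as [c [Hc _]];
    [intros c _; apply derivable_pt_lim_cos |].
  rewrite Hc, Rabs_Ropp.
  assert (Rabs (sin c) <= 1) by (apply Rabs_le, SIN_bound).
  pose proof (Rabs_pos (a - b)). nra.
Qed.

Lemma exp_lipschitz_nonpos a b : a <= 0 -> b <= 0 -> Rabs (exp a - exp b) <= Rabs (a - b).
Proof.
  intros Ha Hb.
  destruct (MVT_abs exp exp b a) as [c [Hc [_ Hcr]]]; [intros c _; apply derivable_pt_lim_exp |].
  rewrite Hc, Rabs_right by (apply Rle_ge, Rlt_le, exp_pos).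
  assert (exp c <= 1).
  { rewrite <- exp_0. apply exp_le_exp_of_le.
    eapply Rle_trans; [exact Hcr | apply Rmax_lub; assumption]. }
  pose proof (Rabs_pos (a - b)). pose proof (exp_pos c). nra.
Qed.

Lemma RInt_sum_n (g : nat -> R -> R) a b N : (forall k, ex_RInt (g k) a b) ->
  ex_RInt (fun x => sum_n (fun k => g k x) N) a b /\
  RInt (fun x => sum_n (fun k => g k x) N) a b = sum_n (fun k => RInt (g k) a b) N.
Proof.
  intros Hg. induction N as [| N [IH1 IH2]].
  - split.
    + eapply ex_RInt_ext; [| apply (Hg 0%nat)]. intros x _. rewrite sum_O. reflexivity.
    + rewrite sum_O. apply RInt_ext. intros x _. rewrite sum_O. reflexivity.
  - assert (E : forall x, sum_n (fun k => g k x) (S N) = plus (sum_n (fun k => g k x) N) (g (S N) x))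
      by (intros; apply sum_Sn).
    split.
    + eapply ex_RInt_ext; [intros x _; symmetry; apply E |].
      apply (ex_RInt_plus _ _ a b IH1 (Hg (S N))).
    + rewrite sum_Sn, (RInt_ext _ _ a b (fun x _ => E x)).
      rewrite (RInt_plus (V := R_CompleteNormedModule)) by auto. rewrite IH2. reflexivity.
Qed.

Lemma RInt_cos_orthogonal k n :
  RInt (fun th => cos (INR k * th - INR n * th)) 0 PI = if Nat.eq_dec k n then PI else 0.
Proof.
  destruct (Nat.eq_dec k n) as [-> | Hne].
  - rewrite (RInt_ext _ (fun _ => 1)).
    + rewrite RInt_const_R. R_eq. ring.
    + intros x _. replace (INR n * x - INR n * x) with 0 by ring. apply cos_0.
  - set (m := INR k - INR n).
    assert (Hm : m <> 0) by (unfold m; intros H; apply (not_INR k n Hne); lra).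
    rewrite (RInt_derive_R (fun th => sin (m * th) / m)).
    + assert (E : m = IZR (Z.of_nat k - Z.of_nat n))
        by (unfold m; rewrite minus_IZR, <- !INR_IZR_INZ; reflexivity).
      rewrite E at 1. rewrite (sin_eq_0_1 _ (ex_intro _ _ eq_refl)), Rmult_0_r, sin_0.
      R_eq. field. exact Hm.
    + intros x _. auto_derive; auto. unfold m. R_eq.
      replace ((INR k - INR n) * x) with (INR k * x - INR n * x) by ring. field. exact Hm.
    + intros x _. auto_derive. auto.
Qed.

Lemma sum_n_kronecker (w : nat -> R) (c : R) n N : (n <= N)%nat ->
  sum_n (fun k => w k * (if Nat.eq_dec k n then c else 0)) N = c * w n.
Proof.
  induction N as [| N IH]; intros HN.
  - assert (n = 0%nat) by lia. subst. rewrite sum_O. destruct (Nat.eq_dec 0 0); [R_eq; ring | lia].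
  - rewrite sum_Sn. change (plus ?a ?b) with (a + b).
    destruct (Nat.eq_dec (S N) n) as [<- | E].
    + rewrite (sum_n_ext_loc _ (fun _ => 0)), sum_n_const; [R_eq; ring |].
      intros k Hk. destruct (Nat.eq_dec k (S N)); [lia | R_eq; ring].
    + rewrite IH by lia. R_eq. ring.
Qed.

(* Real and imaginary parts of [W th = sum_k w k e^{i k th}], so that
   [cos_series w th * cos psi + sin_series w th * sin psi] is [Re (W th e^{-i psi})]. *)
Definition cos_series (w : nat -> R) (th : R) : R := Series (fun k => w k * cos (INR k * th)).
Definition sin_series (w : nat -> R) (th : R) : R := Series (fun k => w k * sin (INR k * th)).

Section FourierCoefficients.

Variable w : nat -> R.
Hypothesis w_ex : ex_series w.
Hypothesis w_ge0 : forall k, 0 <= w k.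

Definition cos_partial_sum (n N : nat) (th : R) : R :=
  sum_n (fun k => w k * cos (INR k * th - INR n * th)) N.

Lemma rotated_series_approx th psi N :
  Rabs (cos_series w th * cos psi + sin_series w th * sin psi
        - sum_n (fun k => w k * cos (INR k * th - psi)) N)
  <= 2 * (Series w - sum_n w N).
Proof.
  rewrite (sum_n_ext _ (fun k => plus (scal (cos psi) (w k * cos (INR k * th)))
                                      (scal (sin psi) (w k * sin (INR k * th))))).
  2:{ intros k. rewrite cos_minus. change (scal ?u ?v) with (u * v). unfold plus; simpl. ring. }
  rewrite sum_n_plus, !sum_n_scal_l. change (scal ?u ?v) with (u * v). unfold plus; simpl.
  assert (Htail : forall f : R -> R, (forall x, Rabs (f x) <= 1) ->
    Rabs (Series (fun k => w k * f (INR k * th)) - sum_n (fun k => w k * f (INR k * th)) N)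
    <= Series w - sum_n w N).
  { intros f Hf. apply Series_sub_sum_n_abs_le; [exact w_ex |].
    intros k. rewrite Rabs_mult, (Rabs_right (w k)) by (apply Rle_ge, w_ge0).
    pose proof (Hf (INR k * th)). pose proof (w_ge0 k). nra. }
  pose proof (Htail cos (fun x => Rabs_le _ _ (COS_bound x))) as T1.
  pose proof (Htail sin (fun x => Rabs_le _ _ (SIN_bound x))) as T2.
  unfold cos_series, sin_series.
  set (S1 := Series (fun k => w k * cos (INR k * th))) in *.
  set (S2 := Series (fun k => w k * sin (INR k * th))) in *.
  set (P1 := sum_n (fun k => w k * cos (INR k * th)) N) in *.
  set (P2 := sum_n (fun k => w k * sin (INR k * th)) N) in *.
  change (sum_n (fun k => w k * cos (INR k * th)) N) with P1.
  change (sum_n (fun k => w k * sin (INR k * th)) N) with P2.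
  replace (S1 * cos psi + S2 * sin psi - (cos psi * P1 + sin psi * P2))
    with (cos psi * (S1 - P1) + sin psi * (S2 - P2)) by ring.
  eapply Rle_trans; [apply Rabs_triang |]. rewrite !Rabs_mult.
  assert (Rabs (cos psi) <= 1) by (apply Rabs_le, COS_bound).
  assert (Rabs (sin psi) <= 1) by (apply Rabs_le, SIN_bound).
  pose proof (Rabs_pos (S1 - P1)). pose proof (Rabs_pos (S2 - P2)). nra.
Qed.

Lemma rotated_series_le th psi : cos_series w th * cos psi + sin_series w th * sin psi <= Series w.
Proof.
  apply Rle_plus_epsilon. intros eta He.
  destruct (Series_sub_sum_n_small w (eta/2) 0 w_ex ltac:(lra)) as [N [_ HN]].
  pose proof (rotated_series_approx th psi N) as Ha. apply Rabs_le_between in Ha.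
  assert (sum_n (fun k => w k * cos (INR k * th - psi)) N <= sum_n w N).
  { apply sum_n_m_le. intros k. pose proof (w_ge0 k). pose proof (COS_bound (INR k * th - psi)). nra. }
  lra.
Qed.

Lemma ex_RInt_cos_partial_sum n N a b : ex_RInt (cos_partial_sum n N) a b.
Proof.
  apply (RInt_sum_n (fun k th => w k * cos (INR k * th - INR n * th)) a b N).
  intros k. apply ex_RInt_of_ex_derive. intros; auto_derive; auto.
Qed.

Lemma RInt_cos_partial_sum n N : (n <= N)%nat -> RInt (cos_partial_sum n N) 0 PI = PI * w n.
Proof.
  intros HN. unfold cos_partial_sum.
  assert (Hk : forall k, ex_RInt (fun th => w k * cos (INR k * th - INR n * th)) 0 PI)
    by (intros k; apply ex_RInt_of_ex_derive; intros; auto_derive; auto).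
  destruct (RInt_sum_n _ 0 PI N Hk) as [_ ->].
  rewrite <- (sum_n_kronecker w PI n N HN). apply sum_n_ext. intros k.
  rewrite <- RInt_cos_orthogonal, <- (RInt_scal (V := R_CompleteNormedModule)); [reflexivity |].
  apply ex_RInt_of_ex_derive. intros; auto_derive; auto.
Qed.

Hypothesis w_pos : 0 < Series w.

Lemma polar_radius_nonpos th r phi :
  cos_series w th = Series w * (exp r * cos phi) ->
  sin_series w th = Series w * (exp r * sin phi) -> r <= 0.
Proof.
  intros E1 E2. pose proof (rotated_series_le th phi) as Hle. rewrite E1, E2 in Hle.
  replace (Series w * (exp r * cos phi) * cos phi + Series w * (exp r * sin phi) * sin phi)
    with (Series w * exp r * (Rsqr (sin phi) + Rsqr (cos phi))) in Hle by (unfold Rsqr; ring).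
  rewrite sin2_cos2 in Hle.
  destruct (Rle_lt_dec r 0) as [| Hr]; [assumption |].
  pose proof (exp_increasing 0 r Hr). rewrite exp_0 in *. nra.
Qed.

Lemma polar_integrand_approx th r phi b A D (n : nat) :
  cos_series w th = Series w * (exp r * cos phi) ->
  sin_series w th = Series w * (exp r * sin phi) ->
  Rabs (r + b*th^2/2) <= D -> Rabs (phi - th*A) <= D -> 0 < b ->
  Rabs (cos_series w th * cos (INR n * th) + sin_series w th * sin (INR n * th)
        - Series w * (exp (-(b*th^2)/2) * cos (th * (A - INR n)))) <= 2 * Series w * D.
Proof.
  intros E1 E2 Dr Dphi Hb.
  pose proof (polar_radius_nonpos th r phi E1 E2) as Hr.
  rewrite E1, E2.
  set (gau := exp (-(b*th^2)/2)). set (c := cos (th * (A - INR n))).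
  replace (Series w * (exp r * cos phi) * cos (INR n * th)
           + Series w * (exp r * sin phi) * sin (INR n * th) - Series w * (gau * c))
    with (Series w * (exp r * (cos (phi - INR n * th) - c) + (exp r - gau) * c))
    by (rewrite cos_minus; ring).
  rewrite Rabs_mult, (Rabs_right (Series w)) by lra.
  assert (L1 : Rabs (exp r - gau) <= D).
  { eapply Rle_trans; [apply exp_lipschitz_nonpos; [exact Hr |] |].
    - assert (0 <= b*th^2) by (apply Rmult_le_pos; nra). lra.
    - replace (r - -(b*th^2)/2) with (r + b*th^2/2) by field. exact Dr. }
  assert (L2 : Rabs (cos (phi - INR n * th) - c) <= D).
  { eapply Rle_trans; [apply cos_lipschitz |].
    replace (phi - INR n * th - th * (A - INR n)) with (phi - th * A) by ring. exact Dphi. }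
  assert (Hc : Rabs c <= 1) by (apply Rabs_le, COS_bound).
  assert (He : exp r <= 1) by (rewrite <- exp_0; apply exp_le_exp_of_le, Hr).
  pose proof (exp_pos r).
  assert (Rabs (exp r * (cos (phi - INR n * th) - c) + (exp r - gau) * c) <= 2 * D).
  { eapply Rle_trans; [apply Rabs_triang |]. rewrite !Rabs_mult, (Rabs_right (exp r)) by lra.
    pose proof (Rabs_pos (cos (phi - INR n * th) - c)). pose proof (Rabs_pos (exp r - gau)). nra. }
  nra.
Qed.

Section GaussianApproximation.

Variables (n : nat) (b delta A D Q : R).
Hypothesis b_pos : 0 < b.
Hypothesis delta_range : 0 <= delta <= PI.
Hypothesis polar_near_0 : forall th, 0 <= th <= delta -> exists r phi,
  cos_series w th = Series w * (exp r * cos phi) /\ sin_series w th = Series w * (exp r * sin phi)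
  /\ Rabs (r + b*th^2/2) <= D /\ Rabs (phi - th*A) <= D.
Hypothesis bound_away_from_0 : forall th, delta <= th <= PI ->
  Rabs (cos_series w th * cos (INR n * th) + sin_series w th * sin (INR n * th)) <= Q.

Lemma cos_partial_sum_near_0 N th : 0 <= th <= delta ->
  Rabs (cos_partial_sum n N th - Series w * (exp (-(b*th^2)/2) * cos (th * (A - INR n))))
  <= 2 * (Series w - sum_n w N) + 2 * Series w * D.
Proof.
  intros Hth. destruct (polar_near_0 th Hth) as (r & phi & E1 & E2 & D1 & D2).
  pose proof (polar_integrand_approx th r phi b A D n E1 E2 D1 D2 b_pos) as Hpolar.
  pose proof (rotated_series_approx th (INR n * th) N) as Htrunc.
  rewrite Rabs_minus_sym in Htrunc.
  set (rot := cos_series w th * cos (INR n * th) + sin_series w th * sin (INR n * th)) in *.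
  replace (cos_partial_sum n N th - Series w * (exp (-(b*th^2)/2) * cos (th * (A - INR n))))
    with ((cos_partial_sum n N th - rot)
          + (rot - Series w * (exp (-(b*th^2)/2) * cos (th * (A - INR n))))) by ring.
  eapply Rle_trans; [apply Rabs_triang |]. apply Rplus_le_compat; assumption.
Qed.

Lemma cos_partial_sum_away_from_0 N th : delta <= th <= PI ->
  Rabs (cos_partial_sum n N th) <= 2 * (Series w - sum_n w N) + Q.
Proof.
  intros Hth. pose proof (bound_away_from_0 th Hth) as Haway.
  pose proof (rotated_series_approx th (INR n * th) N) as Htrunc.
  rewrite Rabs_minus_sym in Htrunc.
  set (rot := cos_series w th * cos (INR n * th) + sin_series w th * sin (INR n * th)) in *.
  replace (cos_partial_sum n N th) with ((cos_partial_sum n N th - rot) + rot) by ring.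
  eapply Rle_trans; [apply Rabs_triang |]. apply Rplus_le_compat; assumption.
Qed.

Lemma fourier_coef_gauss_approx_trunc N : (n <= N)%nat ->
  Rabs (PI * w n - Series w * gauss_cos b delta (A - INR n))
  <= delta * (2 * Series w * D) + PI * Q + 2 * PI * (Series w - sum_n w N).
Proof.
  intros HnN.
  set (tau := Series w - sum_n w N).
  assert (Htau : 0 <= tau) by (apply Series_sub_sum_n_ge0; assumption).
  set (g := fun th => Series w * (exp (-(b*th^2)/2) * cos (th * (A - INR n)))).
  assert (Hg : ex_RInt g 0 delta)
    by (apply ex_RInt_of_ex_derive; intros; unfold g; auto_derive; auto).
  assert (Hs : ex_RInt (cos_partial_sum n N) 0 delta) by apply ex_RInt_cos_partial_sum.
  assert (Eg : Series w * gauss_cos b delta (A - INR n) = RInt g 0 delta).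
  { unfold gauss_cos, g. rewrite <- (RInt_scal (V := R_CompleteNormedModule)); [reflexivity |].
    apply ex_RInt_gauss_cos. }
  assert (Ef : PI * w n = RInt (cos_partial_sum n N) 0 delta
                          + RInt (cos_partial_sum n N) delta PI).
  { rewrite <- (RInt_cos_partial_sum n N HnN).
    rewrite <- (RInt_Chasles (V := R_CompleteNormedModule) _ 0 delta PI)
      by apply ex_RInt_cos_partial_sum.
    reflexivity. }
  assert (I1 : Rabs (RInt (cos_partial_sum n N) 0 delta - RInt g 0 delta)
               <= (delta - 0) * (2 * tau + 2 * Series w * D)).
  { rewrite <- (RInt_minus (V := R_CompleteNormedModule)) by assumption.
    apply abs_RInt_le_const; [lra | apply (ex_RInt_minus (V := R_CompleteNormedModule)); assumption |].
    intros th Hth. apply cos_partial_sum_near_0, Hth. }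
  assert (I2 : Rabs (RInt (cos_partial_sum n N) delta PI) <= (PI - delta) * (2 * tau + Q)).
  { apply abs_RInt_le_const; [lra | apply ex_RInt_cos_partial_sum |].
    intros th Hth. apply cos_partial_sum_away_from_0, Hth. }
  assert (HQ : 0 <= Q)
    by (eapply Rle_trans; [apply Rabs_pos | apply (bound_away_from_0 PI); lra]).
  rewrite Eg, Ef.
  replace (RInt (cos_partial_sum n N) 0 delta + RInt (cos_partial_sum n N) delta PI
           - RInt g 0 delta)
    with ((RInt (cos_partial_sum n N) 0 delta - RInt g 0 delta)
          + RInt (cos_partial_sum n N) delta PI) by ring.
  eapply Rle_trans; [apply Rabs_triang |].
  assert (0 <= delta * Q) by (apply Rmult_le_pos; lra).
  lra.
Qed.

Lemma fourier_coef_gauss_approx :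
  Rabs (PI * w n - Series w * gauss_cos b delta (A - INR n))
  <= delta * (2 * Series w * D) + PI * Q.
Proof.
  apply Rle_plus_epsilon. intros eta He.
  destruct (Series_sub_sum_n_small w (eta/(2*PI)) n w_ex) as [N [HnN HN]].
  { apply Rdiv_lt_0_compat; [lra | pose proof PI_RGT_0; lra]. }
  pose proof (fourier_coef_gauss_approx_trunc N HnN).
  assert (2 * PI * (Series w - sum_n w N) < eta).
  { pose proof PI_RGT_0. apply (Rmult_lt_compat_l (2*PI)) in HN; [| lra].
    replace (2 * PI * (eta / (2 * PI))) with eta in HN by (field; lra). exact HN. }
  lra.
Qed.

End GaussianApproximation.

End FourierCoefficients.

(** * Type II admissible series *)

Definition weights (c : nat -> R) (t : R) (k : nat) : R := c k * exp (INR k * t).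

Lemma exp_pow_INR t k : exp t ^ k = exp (INR k * t).
Proof.
  induction k as [| k IH]; [simpl; rewrite Rmult_0_l, exp_0; reflexivity |].
  rewrite S_INR. simpl. rewrite IH, <- exp_plus. f_equal. ring.
Qed.

Section Weights.

Variables (c : nat -> R) (t : R).
Hypothesis c_entire : CV_radius c = p_infty.
Hypothesis c_ge0 : forall k, 0 <= c k.

Lemma weights_ge0 k : 0 <= weights c t k.
Proof. apply Rmult_le_pos; [apply c_ge0 | apply Rlt_le, exp_pos]. Qed.

Lemma ex_series_weights : ex_series (weights c t).
Proof.
  assert (Hx : Rbar_lt (Rabs (exp t)) (CV_radius c)) by (rewrite c_entire; exact I).
  eapply ex_series_ext; [| exact (CV_radius_inside c (exp t) Hx)].
  intros k. unfold weights. rewrite <- exp_pow_INR, <- pow_n_pow.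
  change (scal ?u ?v) with (u * v). apply Rmult_comm.
Qed.

Lemma Hr_Series_weights : Hr c t = Series (weights c t).
Proof. apply Series_ext. intros k. unfold weights. rewrite exp_pow_INR. reflexivity. Qed.

Lemma Hr_pos k : c k <> 0 -> 0 < Hr c t.
Proof.
  intros Hk. rewrite Hr_Series_weights.
  apply (Series_pos _ k ex_series_weights weights_ge0).
  apply Rmult_lt_0_compat; [| apply exp_pos].
  destruct (c_ge0 k) as [| E]; [assumption | symmetry in E; contradiction].
Qed.

End Weights.

Lemma Hc_weights c t th : Hc c t th = (cos_series (weights c t) th, sin_series (weights c t) th).
Proof. reflexivity. Qed.

Lemma Rabs_Im_le_Cmod (z : C) : Rabs (Im z) <= Cmod z.
Proof. eapply Rle_trans; [apply Rmax_r | apply Rmax_Cmod]. Qed.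

Lemma Rabs_rotate_le_Cmod x y psi : Rabs (x * cos psi + y * sin psi) <= Cmod (x, y).
Proof.
  unfold Cmod. simpl. rewrite <- sqrt_Rsqr_abs. apply sqrt_le_1_alt.
  pose proof (sin2_cos2 psi). pose proof (pow2_ge_0 (x * sin psi - y * cos psi)).
  unfold Rsqr in *. nra.
Qed.

Lemma polar_of_cexp_quotient (x y h b A D th : R) (Delta : C) : h <> 0 ->
  Cdiv (x, y) (RtoC h) = cexp (Cplus (- th^2 * b / 2, th * A) Delta) -> Cmod Delta <= D ->
  exists r phi, x = h * (exp r * cos phi) /\ y = h * (exp r * sin phi)
    /\ Rabs (r + b * th^2 / 2) <= D /\ Rabs (phi - th * A) <= D.
Proof.
  intros Hh E HD.
  exists (- th^2 * b / 2 + Re Delta), (th * A + Im Delta).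
  pose proof (f_equal fst E) as E1. pose proof (f_equal snd E) as E2.
  unfold Cdiv, Cmult, Cinv, RtoC, cexp, Cplus in E1, E2. cbn [fst snd Re Im] in E1, E2.
  change (Re Delta) with (fst Delta). change (Im Delta) with (snd Delta).
  repeat split.
  - rewrite <- E1. field. exact Hh.
  - rewrite <- E2. field. exact Hh.
  - replace (- th^2 * b / 2 + fst Delta + b * th^2 / 2) with (fst Delta) by field.
    eapply Rle_trans; [apply re_le_Cmod | exact HD].
  - replace (th * A + snd Delta - th * A) with (snd Delta) by ring.
    eapply Rle_trans; [apply Rabs_Im_le_Cmod | exact HD].
Qed.

Lemma normalized_error_le (b H wn g : R) : 0 < b -> 0 < H ->
  Rabs (wn * sqrt (2*PI*b) / H - g) <= sqrt b * Rabs (PI * wn / H - g * sqrt (PI/(2*b))).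
Proof.
  intros Hb HH. pose proof PI2_1 as HPI.
  set (q := sqrt (2*b/PI)).
  assert (Hq : sqrt (2*PI*b) = PI * q).
  { unfold q. rewrite <- (sqrt_square PI) at 2 by lra.
    rewrite <- sqrt_mult by (try apply Rlt_le, Rdiv_lt_0_compat; nra). f_equal. field. lra. }
  assert (Hqs : q * sqrt (PI/(2*b)) = 1).
  { unfold q. rewrite <- sqrt_mult, <- sqrt_1 by (apply Rlt_le, Rdiv_lt_0_compat; lra).
    f_equal. field. lra. }
  assert (Hqb : q <= sqrt b) by (apply sqrt_le_1_alt; unfold Rdiv; apply (Rmult_le_reg_r PI); [lra |];
                                   rewrite Rmult_assoc, Rinv_l by lra; nra).
  replace (wn * sqrt (2*PI*b) / H - g) with (q * (PI * wn / H - g * sqrt (PI/(2*b)))).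
  - rewrite Rabs_mult, Rabs_right by (apply Rle_ge, sqrt_pos).
    apply Rmult_le_compat_r; [apply Rabs_pos | exact Hqb].
  - rewrite Hq. transitivity (q * (PI * wn / H) - g * (q * sqrt (PI/(2*b)))); [ring |].
    rewrite Hqs. field. lra.
Qed.

Lemma ln_le_Rpower b e : 1 <= b -> 0 < e -> ln b <= Rpower b e / e.
Proof.
  intros Hb He. pose proof (exp_ineq1_le (e * ln b)).
  apply (Rmult_le_reg_l e); [exact He |]. unfold Rpower. field_simplify; lra.
Qed.

Lemma ln_sq_le_Rpower b e : 1 <= b -> 0 < e -> ln b ^ 2 <= 16 / e^2 * Rpower b (e/2).
Proof.
  intros Hb He.
  assert (H0 : 0 <= ln b) by (rewrite <- ln_1; apply ln_le; lra).
  pose proof (ln_le_Rpower b (e/4) Hb ltac:(lra)) as Hl.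
  replace (16 / e^2 * Rpower b (e/2)) with ((Rpower b (e/4) / (e/4)) ^ 2)
    by (replace (e/2) with (e/4 + e/4) by field; rewrite Rpower_plus; field; lra).
  apply pow_incr. lra.
Qed.

(* With [dl^2 = CG ln b / b] the term is [2 CG^2 (ln b)^2 b^(-e0)]; halving [e0] absorbs
   the logarithms. *)
Lemma delta_error_term_le b CG e0 dl : 1 < b -> 0 < e0 -> dl^2 = CG * ln b / b ->
  sqrt b * (2 * dl * (Rpower b (3/2 - e0) * dl^3)) <= 32*CG^2/e0^2 * Rpower b (- (e0/2)).
Proof.
  intros Hb He0 Hdl2.
  set (P := Rpower b).
  assert (Pplus : forall x z, P (x + z) = P x * P z) by (intros; apply Rpower_plus).
  set (r := sqrt b).
  assert (Hrr : r * r = b) by (apply sqrt_sqrt; lra).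
  assert (Hr0 : 0 < r) by (apply sqrt_lt_R0; lra).
  replace (P (3/2 - e0)) with (P 1 * P (/2) * P (- e0)) by (rewrite <- !Pplus; f_equal; field).
  replace (P 1) with b by (symmetry; apply Rpower_1; lra).
  replace (P (/2)) with r by (symmetry; apply Rpower_sqrt; lra).
  replace (r * (2 * dl * (b * r * P (- e0) * dl^3))) with (2 * CG^2 * ln b ^ 2 * P (- e0))
    by (rewrite <- Hrr in Hdl2 |- *;
        replace (r * (2 * dl * (r * r * r * P (- e0) * dl^3)))
          with (2 * (r * r * dl^2)^2 * P (- e0)) by ring;
        rewrite Hdl2; field; lra).
  pose proof (ln_sq_le_Rpower b e0 ltac:(lra) He0).
  assert (0 < P (- e0)) by apply exp_pos.
  apply Rle_trans with (2 * CG^2 * (16 / e0^2 * P (e0/2)) * P (- e0)).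
  - apply Rmult_le_compat_r; [lra |]. apply Rmult_le_compat_l; [nra | assumption].
  - right. replace (- (e0/2)) with (e0/2 + - e0) by field. rewrite Pplus. field. lra.
Qed.

(* [exp (-(b dl^2)/2) = b^(-CG/2) <= 1/b] because [CG > 2]. *)
Lemma error_terms_le b CG e0 K dl : 1 < b -> 2 < CG -> 0 < e0 -> 0 <= dl ->
  dl^2 = CG * ln b / b ->
  sqrt b * (2 * dl * (Rpower b (3/2 - e0) * dl^3) + PI * Rabs K / b + 4 * exp (-(b*dl^2)/2) / sqrt b)
  <= (32*CG^2/e0^2 + 4*Rabs K + 4) / Rpower b (Rmin (e0/2) (1/2)).
Proof.
  intros Hb HCG He0 Hdl Hdl2.
  set (e' := Rmin (e0/2) (1/2)).
  assert (He' : e' <= e0/2 /\ e' <= 1/2) by (split; [apply Rmin_l | apply Rmin_r]).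
  set (P := Rpower b).
  assert (Pmono : forall x z, x <= z -> P x <= P z) by (intros; apply Rle_Rpower; lra).
  assert (Ppos : forall x, 0 < P x) by (intros; apply exp_pos).
  assert (Popp : forall x, P (- x) = / P x) by (intros; apply Rpower_Ropp).
  set (r := sqrt b).
  assert (Hr : P (/2) = r) by (apply Rpower_sqrt; lra).
  assert (Hrr : r * r = b) by (apply sqrt_sqrt; lra).
  assert (Hr0 : 0 < r) by (apply sqrt_lt_R0; lra).
  assert (T1 : r * (2 * dl * (P (3/2 - e0) * dl^3)) <= 32*CG^2/e0^2 * P (- e')).
  { eapply Rle_trans; [apply (delta_error_term_le b CG e0 dl); assumption |].
    apply Rmult_le_compat_l; [apply Rlt_le, Rdiv_lt_0_compat; nra | apply Pmono; lra]. }
  assert (T2 : r * (PI * Rabs K / b) <= 4 * Rabs K * P (- e')).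
  { replace (r * (PI * Rabs K / b)) with (PI * Rabs K * P (- / 2))
      by (rewrite Popp, Hr, <- Hrr; field; lra).
    pose proof PI_4. pose proof PI_RGT_0. pose proof (Rabs_pos K).
    apply Rmult_le_compat; [nra | apply Rlt_le, Ppos | nra | apply Pmono; lra]. }
  assert (T3 : r * (4 * exp (-(b*dl^2)/2) / r) <= 4 * P (- e')).
  { replace (r * (4 * exp (-(b*dl^2)/2) / r)) with (4 * exp (-(b*dl^2)/2)) by (field; lra).
    apply Rmult_le_compat_l; [lra |].
    apply Rle_trans with (P (- 1)); [| apply Pmono; lra].
    unfold P, Rpower. apply exp_le_exp_of_le.
    assert (Hlnb : 0 < ln b) by (rewrite <- ln_1; apply ln_increasing; lra).
    replace (b * dl^2) with (CG * ln b) by (rewrite Hdl2; field; lra). nra. }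
  replace ((32*CG^2/e0^2 + 4*Rabs K + 4) / P e')
    with ((32*CG^2/e0^2 + 4*Rabs K + 4) * P (- e')) by (rewrite Popp; reflexivity).
  rewrite !Rmult_plus_distr_l. lra.
Qed.

Lemma relative_error_le (H x y g e1 e2 : R) : 0 < H ->
  Rabs (x - H * y) <= H * e1 -> Rabs (y - g) <= e2 -> Rabs (x / H - g) <= e1 + e2.
Proof.
  intros HH Hx Hy.
  replace (x / H - g) with ((x - H * y) / H + (y - g)) by (field; lra).
  eapply Rle_trans; [apply Rabs_triang |].
  rewrite Rabs_div, (Rabs_right H) by lra.
  apply Rplus_le_compat; [| exact Hy].
  apply (Rmult_le_reg_r H); [exact HH |]. unfold Rdiv. rewrite Rmult_assoc, Rinv_l by lra. lra.
Qed.

Lemma deltaf_sq c CG t : 0 < CG -> 1 < Bf c t -> deltaf c CG t ^ 2 = CG * ln (Bf c t) / Bf c t.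
Proof.
  intros HCG Hb. unfold deltaf. rewrite <- Rsqr_pow2. apply Rsqr_sqrt.
  assert (0 < ln (Bf c t)) by (rewrite <- ln_1; apply ln_increasing; lra).
  apply Rlt_le, Rdiv_lt_0_compat; [apply Rmult_lt_0_compat |]; lra.
Qed.

Lemma mul_ln_le_self CG b : 0 < CG -> 1 <= b -> 4 * CG^2 <= b -> CG * ln b <= b.
Proof.
  intros HCG Hb1 Hb.
  pose proof (ln_le_Rpower b (/2) Hb1 ltac:(lra)) as Hl. rewrite Rpower_sqrt in Hl by lra.
  assert (Hs : 2 * CG <= sqrt b)
    by (rewrite <- (sqrt_square (2*CG)) by lra; apply sqrt_le_1_alt; nra).
  pose proof (sqrt_sqrt b ltac:(lra)). pose proof (sqrt_pos b).
  assert (0 <= ln b) by (rewrite <- ln_1; apply ln_le; lra).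
  replace (sqrt b / / 2) with (2 * sqrt b) in Hl by (field; lra). nra.
Qed.

Section CoefficientEstimate.

Variables (c : nat -> R) (CG e0 K t : R).
Hypothesis c_entire : CV_radius c = p_infty.
Hypothesis c_ge0 : forall k, 0 <= c k.
Hypothesis H_pos : 0 < Hr c t.
Hypothesis CG_gt_2 : 2 < CG.
Hypothesis e0_pos : 0 < e0.
Hypothesis B_large : 1 + 4 * CG^2 < Bf c t.
Hypothesis local_expansion : forall th, Rabs th <= deltaf c CG t -> exists Delta : C,
  Cdiv (Hc c t th) (RtoC (Hr c t)) = cexp (Cplus (- th ^ 2 * Bf c t / 2, th * Af c t) Delta) /\
  Cmod Delta <= Rpower (Bf c t) (3 / 2 - e0) * Rabs th ^ 3.
Hypothesis decay_away_from_0 : forall th, deltaf c CG t <= Rabs th -> Rabs th <= PI ->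
  Cmod (Hc c t th) <= K * (Hr c t / Bf c t).

Lemma deltaf_le_1 : deltaf c CG t <= 1.
Proof.
  assert (Hb : 1 < Bf c t) by nra.
  pose proof (deltaf_sq c CG t ltac:(lra) Hb) as Hdl2.
  assert (deltaf c CG t ^ 2 <= 1).
  { rewrite Hdl2. apply (Rmult_le_reg_r (Bf c t)); [lra |]. unfold Rdiv.
    rewrite Rmult_assoc, Rinv_l, Rmult_1_l, Rmult_1_r by lra. apply mul_ln_le_self; nra. }
  pose proof (sqrt_pos (CG * ln (Bf c t) / Bf c t)). unfold deltaf in *. nra.
Qed.

Lemma polar_form_near_0 th : 0 <= th <= deltaf c CG t -> exists r phi,
  cos_series (weights c t) th = Series (weights c t) * (exp r * cos phi) /\
  sin_series (weights c t) th = Series (weights c t) * (exp r * sin phi) /\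
  Rabs (r + Bf c t * th^2/2) <= Rpower (Bf c t) (3/2 - e0) * deltaf c CG t ^ 3 /\
  Rabs (phi - th * Af c t) <= Rpower (Bf c t) (3/2 - e0) * deltaf c CG t ^ 3.
Proof.
  intros Hth.
  destruct (local_expansion th) as [Delta [E HDelta]]; [rewrite Rabs_right; lra |].
  rewrite Hc_weights, Hr_Series_weights in E.
  apply (polar_of_cexp_quotient _ _ _ _ _ _ _ Delta); [| exact E |].
  - rewrite <- Hr_Series_weights. lra.
  - eapply Rle_trans; [exact HDelta |].
    apply Rmult_le_compat_l; [apply Rlt_le, exp_pos |].
    apply pow_incr. rewrite Rabs_right; lra.
Qed.

Lemma rotated_Hc_le_away_from_0 th psi : deltaf c CG t <= th <= PI ->
  Rabs (cos_series (weights c t) th * cos psi + sin_series (weights c t) th * sin psi)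
  <= Rabs K * (Series (weights c t) / Bf c t).
Proof.
  intros Hth. assert (0 <= deltaf c CG t) by apply sqrt_pos.
  eapply Rle_trans; [apply Rabs_rotate_le_Cmod |]. rewrite <- Hc_weights.
  eapply Rle_trans; [apply decay_away_from_0; rewrite Rabs_right; lra |].
  rewrite Hr_Series_weights. apply Rmult_le_compat_r; [| apply Rle_abs].
  rewrite <- Hr_Series_weights. apply Rlt_le, Rdiv_lt_0_compat; nra.
Qed.

Lemma coef_gauss_estimate n :
  Rabs (c n * exp (INR n * t) * sqrt (2 * PI * Bf c t) / Hr c t
        - exp (- (INR n - Af c t) ^ 2 / (2 * Bf c t)))
  <= (32*CG^2/e0^2 + 4*Rabs K + 4) / Rpower (Bf c t) (Rmin (e0/2) (1/2)).
Proof.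
  assert (Hb : 1 < Bf c t) by nra.
  pose proof (deltaf_sq c CG t ltac:(lra) Hb) as Hdl2.
  assert (Hdl : 0 <= deltaf c CG t <= PI)
    by (split; [apply sqrt_pos | pose proof deltaf_le_1; pose proof PI2_1; lra]).
  pose proof (fourier_coef_gauss_approx (weights c t) (ex_series_weights c t c_entire)
    (weights_ge0 c t c_ge0) ltac:(rewrite <- Hr_Series_weights; exact H_pos) n (Bf c t)
    (deltaf c CG t) (Af c t) _ _ ltac:(lra) Hdl polar_form_near_0
    (fun th => rotated_Hc_le_away_from_0 th (INR n * th))) as Hcore.
  rewrite <- Hr_Series_weights in Hcore.
  pose proof (gauss_cos_approx (Bf c t) (deltaf c CG t) (Af c t - INR n) ltac:(lra) (proj1 Hdl))
    as Hgauss.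
  replace ((INR n - Af c t) ^ 2) with ((Af c t - INR n) ^ 2) by ring.
  eapply Rle_trans; [apply normalized_error_le; lra |].
  eapply Rle_trans; [| apply (error_terms_le _ CG e0 K (deltaf c CG t)); try lra; assumption].
  apply Rmult_le_compat_l; [apply sqrt_pos |].
  eapply (relative_error_le (Hr c t) (PI * weights c t n) _ _ _ _ H_pos); [| exact Hgauss].
  eapply Rle_trans; [exact Hcore |]. right. field. lra.
Qed.

End CoefficientEstimate.

Theorem lemma6p5 (a : nat -> R) :
  type_II_admissible (fun n => a n ^ 2) ->
  exists eps C t0, 0 < eps < 1 /\ 0 < C /\
    forall t (n : nat), t0 <= t ->
      Rabs (a n ^ 2 * exp (INR n * t)
              * sqrt (2 * PI * Bf (fun k => a k ^ 2) t) / Hr (fun k => a k ^ 2) t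
            - exp (- (INR n - Af (fun k => a k ^ 2) t) ^ 2
                   / (2 * Bf (fun k => a k ^ 2) t)))
        <= C / Rpower (Bf (fun k => a k ^ 2) t) eps.
Proof.
  intros (Hrad & Hge0 & Hinf & Hmono & Hunb & _ & CG & e0 & HCG & He0 & [T3 H3] & K & T4 & H4).
  destruct (Hunb (1 + 4 * CG^2)) as [t1 Ht1].
  destruct (Hinf 0%nat) as [k [_ Hk]].
  exists (Rmin (e0/2) (1/2)), (32*CG^2/e0^2 + 4*Rabs K + 4), (Rmax t1 (Rmax T3 T4)).
  split; [split; [apply Rmin_glb_lt | eapply Rle_lt_trans; [apply Rmin_r |]]; lra |].
  split.
  { assert (0 <= 32*CG^2/e0^2) by (apply Rdiv_le_0_compat; [nra | apply pow_lt, He0]).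
    pose proof (Rabs_pos K). lra. }
  intros t n Ht.
  pose proof (Rmax_l t1 (Rmax T3 T4)). pose proof (Rmax_r t1 (Rmax T3 T4)).
  pose proof (Rmax_l T3 T4). pose proof (Rmax_r T3 T4).
  apply (coef_gauss_estimate (fun k => a k ^ 2) CG e0 K t Hrad Hge0); trivial.
  - exact (Hr_pos _ t Hrad Hge0 k Hk).
  - pose proof (Hmono t1 t ltac:(lra)). lra.
  - intros th Hth. apply H3; lra.
  - intros th Hth1 Hth2. apply H4; lra.
Qed.
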